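(* Let $\mathcal{X}$ be an extension-closed subcategory of $\mathcal{C}$ and $\mathcal{W}$ a cogenerator for $\mathcal{X}$. Let $n\ge1$ and $C\in\mathcal{C}$. Then $C\in\widehat{\mathcal{X}}_n$ if and only if there exists an $\mathbb{E}$-triangle sequence $W_n\to\cdots\to W_2\to W_1\to X_0\to C$ with $X_0\in\mathcal{X}$ and $W_i\in\mathcal{W}$ for $1\le i\le n$, i.e. there exist $\mathbb{E}$-triangles $K_1\to X_0\to C\dashrightarrow$ and $K_{i+1}\to W_i\to K_i\dashrightarrow$ for $1\le i\le n-1$, with $K_n=W_n$.
   Context: $\mathcal{C}=(\mathcal{C},\mathbb{E},\mathfrak{s})$ is an extriangulated category (in the sense of Nakaoka–Palu) with enough projectives and enough injectives; a conflation realizing $\delta\in\mathbb{E}(C,A)$ is written as an $\mathbb{E}$-triangle $A\to B\to C\dashrightarrow$. All subcategories are full, additive, closed under isomorphisms and direct summands. $\mathcal{X}$ is extension-closed if for every $\mathbb{E}$-triangle $A\to B\to C\dashrightarrow$ with $A,C\in\mathcal{X}$ one has $B\in\mathcal{X}$. $\mathcal{W}$ is a cogenerator for $\mathcal{X}$ if $\mathcal{W}\subseteq\mathcal{X}$ and for each $X\in\mathcal{X}$ there is an $\mathbb{E}$-triangle $X\to W\to X'\dashrightarrow$ with $W\in\mathcal{W}$, $X'\in\mathcal{X}$. For $n\ge0$, $\widehat{\mathcal{X}}_n$ is the subcategory of objects $C$ for which there exist $\mathbb{E}$-triangles $K_{i+1}\to X_i\to K_i\dashrightarrow$ ($0\le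 i\le n-1$) with $K_0=C$, all $X_i\in\mathcal{X}$ and $K_n\in\mathcal{X}$. *)

From HB Require Import structures.
From mathcomp Require Import all_boot all_algebra.
Set Implicit Arguments. Unset Strict Implicit. Unset Printing Implicit Defensive.
Import GRing.Theory.
Local Open Scope ring_scope.

(* Data of an extriangulated category (Nakaoka--Palu):                 *)
(*  an additive category, a biadditive functor E : C^op x C -> Ab,      *)
(*  and a realization s.  [Ext C A] is E(C,A); [push a] is a_* and      *)
(*  [pull c] is c^*; [real d x y] means that the sequence               *)
(*  A -x-> B -y-> C belongs to the equivalence class s(d).              *)
Record ExtriData := {
  obj : Type;
  hom : obj -> obj -> zmodType;
  comp : forall A B C : obj, hom B C -> hom A B -> hom A C;
  idm : forall A : obj, hom A A;
  Ext : obj -> obj -> zmodType;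
  push : forall A A' C : obj, hom A A' -> Ext C A -> Ext C A';
  pull : forall A C C' : obj, hom C' C -> Ext C A -> Ext C' A;
  real : forall A B C : obj, Ext C A -> hom A B -> hom B C -> Prop
}.
Arguments comp {_ _ _ _} _ _.
Arguments idm {_} _.
Arguments push {_ _ _ _} _ _.
Arguments pull {_ _ _ _} _ _.
Arguments real {_ _ _ _} _ _ _.

Section ExtriDefs.
Variable C : ExtriData.
Local Notation Ob := (obj C).
Local Notation Hm := (@hom C).
Local Notation Ex := (@Ext C).

Definition is_iso (A B : Ob) (f : Hm A B) : Prop :=
  exists g : Hm B A, comp g f = idm A /\ comp f g = idm B.

Definition isomorphic (A B : Ob) : Prop := exists f : Hm A B, is_iso f.

Definition is_biproduct (A1 A2 P : Ob) (i1 : Hm A1 P) (i2 : Hm A2 P)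
    (p1 : Hm P A1) (p2 : Hm P A2) : Prop :=
  [/\ comp p1 i1 = idm A1, comp p2 i2 = idm A2, comp p1 i2 = 0,
      comp p2 i1 = 0 & comp i1 p1 + comp i2 p2 = idm P].

Definition is_zero_obj (Z : Ob) : Prop := idm Z = 0.

Definition category_axioms : Prop :=
  [/\ (forall (A B D E : Ob) (f : Hm D E) (g : Hm B D) (h : Hm A B),
         comp f (comp g h) = comp (comp f g) h),
      (forall (A B : Ob) (f : Hm A B), comp (idm B) f = f),
      (forall (A B : Ob) (f : Hm A B), comp f (idm A) = f),
      (forall (A B D : Ob) (f f' : Hm B D) (g : Hm A B),
         comp (f + f') g = comp f g + comp f' g) &
      (forall (A B D : Ob) (f : Hm B D) (g g' : Hm A B),
         comp f (g + g') = comp f g + comp f g')].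

Definition additive_axioms : Prop :=
  (exists Z : Ob, is_zero_obj Z) /\
  (forall A1 A2 : Ob, exists (P : Ob) (i1 : Hm A1 P) (i2 : Hm A2 P)
       (p1 : Hm P A1) (p2 : Hm P A2), is_biproduct i1 i2 p1 p2).

Definition bifunctor_axioms : Prop :=
  ( (forall (A D : Ob) (d : Ex D A), push (idm A) d = d) /\
      (forall (A D : Ob) (d : Ex D A), pull (idm D) d = d) /\
      (forall (A A' A'' D : Ob) (a : Hm A A') (a' : Hm A' A'') (d : Ex D A),
         push (comp a' a) d = push a' (push a d)) /\
      (forall (A D D' D'' : Ob) (c : Hm D' D) (c' : Hm D'' D') (d : Ex D A),
         pull (comp c c') d = pull c' (pull c d)) /\
      (forall (A A' D D' : Ob) (a : Hm A A') (c : Hm D' D) (d : Ex D A),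
         push a (pull c d) = pull c (push a d)) /\
      (forall (A A' D : Ob) (a : Hm A A') (d d' : Ex D A),
         push a (d + d') = push a d + push a d') /\
      (forall (A A' D : Ob) (a a' : Hm A A') (d : Ex D A),
         push (a + a') d = push a d + push a' d) /\
      (forall (A D D' : Ob) (c : Hm D' D) (d d' : Ex D A),
         pull c (d + d') = pull c d + pull c d') /\
      (forall (A D D' : Ob) (c c' : Hm D' D) (d : Ex D A),
         pull (c + c') d = pull c d + pull c' d)).

Definition equiv_seq (A B B' D : Ob) (x : Hm A B) (y : Hm B D)
    (x' : Hm A B') (y' : Hm B' D) : Prop :=
  exists b : Hm B B', is_iso b /\ comp b x = x' /\ comp y' b = y.

Definition realization_axioms : Prop :=
  [/\ (forall (A D : Ob) (d : Ex D A),
         exists (B : Ob) (x : Hm A B) (y : Hm B D), real d x y),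
      (forall (A B B' D : Ob) (d : Ex D A) (x : Hm A B) (y : Hm B D)
              (x' : Hm A B') (y' : Hm B' D),
         real d x y -> (real d x' y' <-> equiv_seq x y x' y')) &
      (forall (A B D A' B' D' : Ob) (d : Ex D A) (d' : Ex D' A')
              (x : Hm A B) (y : Hm B D) (x' : Hm A' B') (y' : Hm B' D')
              (a : Hm A A') (c : Hm D D'),
         real d x y -> real d' x' y' -> push a d = pull c d' ->
         exists b : Hm B B', comp b x = comp x' a /\ comp y' b = comp c y)].

Definition additive_realization : Prop :=
  (forall (A D P : Ob) (i1 : Hm A P) (i2 : Hm D P) (p1 : Hm P A) (p2 : Hm P D),
     is_biproduct i1 i2 p1 p2 -> real (0 : Ex D A) i1 p2) /\
  (forall (A B D A' B' D' PA PB PD : Ob)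
          (iA1 : Hm A PA) (iA2 : Hm A' PA) (pA1 : Hm PA A) (pA2 : Hm PA A')
          (iB1 : Hm B PB) (iB2 : Hm B' PB) (pB1 : Hm PB B) (pB2 : Hm PB B')
          (iD1 : Hm D PD) (iD2 : Hm D' PD) (pD1 : Hm PD D) (pD2 : Hm PD D')
          (d : Ex D A) (d' : Ex D' A')
          (x : Hm A B) (y : Hm B D) (x' : Hm A' B') (y' : Hm B' D'),
     is_biproduct iA1 iA2 pA1 pA2 -> is_biproduct iB1 iB2 pB1 pB2 ->
     is_biproduct iD1 iD2 pD1 pD2 ->
     real d x y -> real d' x' y' ->
     real (push iA1 (pull pD1 d) + push iA2 (pull pD2 d'))
          (comp iB1 (comp x pA1) + comp iB2 (comp x' pA2))
          (comp iD1 (comp y pB1) + comp iD2 (comp y' pB2))).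

Definition ET3 : Prop :=
  forall (A B D A' B' D' : Ob) (d : Ex D A) (d' : Ex D' A')
         (x : Hm A B) (y : Hm B D) (x' : Hm A' B') (y' : Hm B' D')
         (a : Hm A A') (b : Hm B B'),
    real d x y -> real d' x' y' -> comp b x = comp x' a ->
    exists c : Hm D D', comp c y = comp y' b /\ push a d = pull c d'.

Definition ET3op : Prop :=
  forall (A B D A' B' D' : Ob) (d : Ex D A) (d' : Ex D' A')
         (x : Hm A B) (y : Hm B D) (x' : Hm A' B') (y' : Hm B' D')
         (b : Hm B B') (c : Hm D D'),
    real d x y -> real d' x' y' -> comp y' b = comp c y ->
    exists a : Hm A A', comp x' a = comp b x /\ push a d = pull c d'.

Definition ET4 : Prop :=
  forall (A B D C0 F : Ob) (d : Ex D A) (d' : Ex F B)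
         (f : Hm A B) (f' : Hm B D) (g : Hm B C0) (g' : Hm C0 F),
    real d f f' -> real d' g g' ->
    exists (E : Ob) (e : Hm D E) (e' : Hm E F) (h' : Hm C0 E) (d'' : Ex E A),
      ( real d'' (comp g f) h' /\ real (push f' d') e e' /\
          comp e f' = comp h' g /\ comp e' h' = g' /\
          pull e d'' = d /\ push f d'' = pull e' d').

Definition ET4op : Prop :=
  forall (D A B F C0 : Ob) (d : Ex B D) (d' : Ex C0 F)
         (f' : Hm D A) (f : Hm A B) (g' : Hm F B) (g : Hm B C0),
    real d f' f -> real d' g' g ->
    exists (E : Ob) (e : Hm D E) (e' : Hm E F) (h' : Hm E A) (d'' : Ex C0 E),
      ( real d'' h' (comp g f) /\ real (pull g' d) e e' /\
          comp f h' = comp g' e' /\ comp h' e = f' /\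
          push e' d'' = d' /\ pull g d'' = push e d).

Definition extriangulated : Prop :=
  ( category_axioms /\ additive_axioms /\ bifunctor_axioms /\ realization_axioms /\
      additive_realization /\ ET3 /\ ET3op /\ ET4 /\ ET4op).

Definition Etriangle (A B D : Ob) (x : Hm A B) (y : Hm B D) : Prop :=
  exists d : Ex D A, real d x y.

Definition Etri (A B D : Ob) : Prop :=
  exists (x : Hm A B) (y : Hm B D), Etriangle x y.

Definition projective (P : Ob) : Prop :=
  forall (A B D : Ob) (x : Hm A B) (y : Hm B D) (c : Hm P D),
    Etriangle x y -> exists b : Hm P B, comp y b = c.

Definition injective (I : Ob) : Prop :=
  forall (A B D : Ob) (x : Hm A B) (y : Hm B D) (a : Hm A I),
    Etriangle x y -> exists b : Hm B I, comp b x = a.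

Definition enough_projectives : Prop :=
  forall D : Ob, exists (A P : Ob), projective P /\ Etri A P D.

Definition enough_injectives : Prop :=
  forall A : Ob, exists (I D : Ob), injective I /\ Etri A I D.

Definition subcategory (X : Ob -> Prop) : Prop :=
  [/\ (forall A B : Ob, isomorphic A B -> X A -> X B),
      (exists Z : Ob, is_zero_obj Z /\ X Z),
      (forall (A1 A2 P : Ob) (i1 : Hm A1 P) (i2 : Hm A2 P)
              (p1 : Hm P A1) (p2 : Hm P A2),
         is_biproduct i1 i2 p1 p2 -> X A1 -> X A2 -> X P) &
      (forall (A1 A2 P : Ob) (i1 : Hm A1 P) (i2 : Hm A2 P)
              (p1 : Hm P A1) (p2 : Hm P A2),
         is_biproduct i1 i2 p1 p2 -> X P -> X A1 /\ X A2)].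

Definition extension_closed (X : Ob -> Prop) : Prop :=
  forall A B D : Ob, Etri A B D -> X A -> X D -> X B.

Definition cogenerator (W X : Ob -> Prop) : Prop :=
  (forall A : Ob, W A -> X A) /\
  (forall A : Ob, X A -> exists (W0 X' : Ob), W W0 /\ X X' /\ Etri A W0 X').

Definition Xhat (X : Ob -> Prop) (n : nat) (D : Ob) : Prop :=
  exists K : nat -> Ob,
    [/\ K 0%N = D, X (K n) &
        forall i : nat, (i < n)%N -> exists Xi : Ob, X Xi /\ Etri (K i.+1) Xi (K i)].

Definition W_resolution (X W : Ob -> Prop) (n : nat) (D : Ob) : Prop :=
  exists (X0 : Ob) (K : nat -> Ob),
    [/\ X X0, Etri (K 1%N) X0 D, W (K n) &
        forall i : nat, (1 <= i)%N -> (i <= n - 1)%N ->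
          exists Wi : Ob, W Wi /\ Etri (K i.+1) Wi (K i)].
End ExtriDefs.

From Pilot Require Import Defs.
From mathcomp Require Import all_boot all_algebra.
Set Implicit Arguments. Unset Strict Implicit. Unset Printing Implicit Defensive.
Import Pilot.Defs.
Import GRing.Theory.
Local Open Scope ring_scope.

(* The heart of the argument is a pushout property of conflations: given
   conflations K -> X0 -> D (realizing d) and K -> E0 -> Y, pushing d along
   K -> E0 yields a conflation E0 -> M -> D together with a conflation
   X0' -> M -> Y where X0' is isomorphic to X0.  It is obtained from (ET4),
   the splitting of conflations realizing 0, the exactness of
   E(D,K) -> E(D,E0) and (ET4)^op.  With X extension-closed, M lies in X.
   Replacing the first term X0 of a resolution by M and the kernel K by a
   cogenerator object (via (ET4) again) turns an X-resolution into a
   W-resolution, one step at a time by induction on n; the converse holds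
   because W is contained in X. *)

Lemma additive_map0 (U V : zmodType) (f : U -> V) :
  (forall x y, f (x + y) = f x + f y) -> f 0 = 0.
Proof.
move=> fD; have := fD 0 0; rewrite addr0 => /(congr1 (fun z => z - f 0)).
by rewrite subrr addrK => <-.
Qed.

Lemma additive_mapB (U V : zmodType) (f : U -> V) :
  (forall x y, f (x + y) = f x + f y) -> forall x y, f (x - y) = f x - f y.
Proof.
move=> fD x y; have fN : f (- y) = - f y.
  by apply/eqP; rewrite -addr_eq0 -fD addrC subrr (additive_map0 fD).
by rewrite fD fN.
Qed.

Section Extriangulated.
Variable C : ExtriData.
Hypothesis HC : extriangulated C.
Local Notation Ob := (obj C).

Let category : category_axioms C. Proof. by case: HC. Qed.
Let additive : additive_axioms C. Proof. by case: HC => _ []. Qed.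
Let bifunctor : bifunctor_axioms C. Proof. by case: HC => _ [_ []]. Qed.
Let realization : realization_axioms C.
Proof. by case: HC => _ [_ [_ []]]. Qed.
Let additive_real : additive_realization C.
Proof. by case: HC => _ [_ [_ [_ []]]]. Qed.
Let et3 : ET3 C. Proof. by case: HC => _ [_ [_ [_ [_ []]]]]. Qed.
Let et4 : ET4 C. Proof. by case: HC => _ [_ [_ [_ [_ [_ [_ []]]]]]]. Qed.
Let et4op : ET4op C. Proof. by case: HC => _ [_ [_ [_ [_ [_ [_ [_ ]]]]]]]. Qed.

Lemma compA (A B D E : Ob) (f : hom D E) (g : hom B D) (h : hom A B) :
  comp f (comp g h) = comp (comp f g) h.
Proof. by case: category => H. Qed.
Lemma comp1l (A B : Ob) (f : hom A B) : comp (idm B) f = f.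
Proof. by case: category => _ H. Qed.
Lemma comp1r (A B : Ob) (f : hom A B) : comp f (idm A) = f.
Proof. by case: category => _ _ H. Qed.
Lemma compDl (A B D : Ob) (f f' : hom B D) (g : hom A B) :
  comp (f + f') g = comp f g + comp f' g.
Proof. by case: category => _ _ _ H. Qed.
Lemma compDr (A B D : Ob) (f : hom B D) (g g' : hom A B) :
  comp f (g + g') = comp f g + comp f g'.
Proof. by case: category => _ _ _ _ H. Qed.
Lemma comp0r (A B D : Ob) (f : hom B D) : comp f (0 : hom A B) = 0.
Proof. exact: (additive_map0 (compDr f)). Qed.
Lemma comp0l (A B D : Ob) (g : hom A B) : comp (0 : hom B D) g = 0.
Proof. exact: (additive_map0 (fun f f' => compDl f f' g)). Qed.
Lemma compBr (A B D : Ob) (f : hom B D) (g g' : hom A B) :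
  comp f (g - g') = comp f g - comp f g'.
Proof. exact: (additive_mapB (compDr f)). Qed.
Lemma compBl (A B D : Ob) (f f' : hom B D) (g : hom A B) :
  comp (f - f') g = comp f g - comp f' g.
Proof. exact: (additive_mapB (fun f f' => compDl f f' g)). Qed.

Lemma push1 (A D : Ob) (d : Ext D A) : push (idm A) d = d.
Proof. by case: bifunctor. Qed.
Lemma pull1 (A D : Ob) (d : Ext D A) : pull (idm D) d = d.
Proof. by case: bifunctor => _ []. Qed.
Lemma pushC (A A' A'' D : Ob) (a : hom A A') (a' : hom A' A'') (d : Ext D A) :
  push (comp a' a) d = push a' (push a d).
Proof. by case: bifunctor => _ [_ []]. Qed.
Lemma pullC (A D D' D'' : Ob) (c : hom D' D) (c' : hom D'' D') (d : Ext D A) :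
  pull (comp c c') d = pull c' (pull c d).
Proof. by case: bifunctor => _ [_ [_ []]]. Qed.
Lemma pushpull (A A' D D' : Ob) (a : hom A A') (c : hom D' D) (d : Ext D A) :
  push a (pull c d) = pull c (push a d).
Proof. by case: bifunctor => _ [_ [_ [_ []]]]. Qed.
Lemma pushDr (A A' D : Ob) (a : hom A A') (d d' : Ext D A) :
  push a (d + d') = push a d + push a d'.
Proof. by case: bifunctor => _ [_ [_ [_ [_ []]]]]. Qed.
Lemma pushDl (A A' D : Ob) (a a' : hom A A') (d : Ext D A) :
  push (a + a') d = push a d + push a' d.
Proof. by case: bifunctor => _ [_ [_ [_ [_ [_ []]]]]]. Qed.
Lemma pullDr (A D D' : Ob) (c : hom D' D) (d d' : Ext D A) :
  pull c (d + d') = pull c d + pull c d'.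
Proof. by case: bifunctor => _ [_ [_ [_ [_ [_ [_ []]]]]]]. Qed.
Lemma pullDl (A D D' : Ob) (c c' : hom D' D) (d : Ext D A) :
  pull (c + c') d = pull c d + pull c' d.
Proof. by case: bifunctor => _ [_ [_ [_ [_ [_ [_ [_ ]]]]]]]. Qed.
Lemma push0l (A A' D : Ob) (d : Ext D A) : push (0 : hom A A') d = 0.
Proof. exact: (additive_map0 (fun a a' => pushDl a a' d)). Qed.
Lemma pull0r (A D D' : Ob) (c : hom D' D) : pull c (0 : Ext D A) = 0.
Proof. exact: (additive_map0 (pullDr c)). Qed.
Lemma pushBr (A A' D : Ob) (a : hom A A') (d d' : Ext D A) :
  push a (d - d') = push a d - push a d'.
Proof. exact: (additive_mapB (pushDr a)). Qed.
Lemma pullBl (A D D' : Ob) (c c' : hom D' D) (d : Ext D A) :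
  pull (c - c') d = pull c d - pull c' d.
Proof. exact: (additive_mapB (fun c c' => pullDl c c' d)). Qed.


Lemma biproduct_exists (A1 A2 : Ob) :
  exists (P : Ob) (i1 : hom A1 P) (i2 : hom A2 P) (p1 : hom P A1)
         (p2 : hom P A2), is_biproduct i1 i2 p1 p2.
Proof. by case: additive. Qed.

Lemma real_split (A D P : Ob) (i1 : hom A P) (i2 : hom D P) (p1 : hom P A)
    (p2 : hom P D) :
  is_biproduct i1 i2 p1 p2 -> real (0 : Ext D A) i1 p2.
Proof. by case: additive_real => H _; apply: H. Qed.

Lemma real_exists (A D : Ob) (d : Ext D A) :
  exists (B : Ob) (x : hom A B) (y : hom B D), real d x y.
Proof. by case: realization. Qed.

Lemma real_equiv (A B B' D : Ob) (d : Ext D A) (x : hom A B) (y : hom B D)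
    (x' : hom A B') (y' : hom B' D) :
  real d x y -> real d x' y' -> equiv_seq x y x' y'.
Proof. by case: realization => _ H _ Hd; apply: (H _ _ _ _ _ _ _ _ _ Hd).1. Qed.

Lemma real_morphism (A B D A' B' D' : Ob) (d : Ext D A) (d' : Ext D' A')
    (x : hom A B) (y : hom B D) (x' : hom A' B') (y' : hom B' D')
    (a : hom A A') (c : hom D D') :
  real d x y -> real d' x' y' -> push a d = pull c d' ->
  exists b : hom B B', comp b x = comp x' a /\ comp y' b = comp c y.
Proof. by case: realization => _ _ H; apply: H. Qed.

Lemma real_comp0 (A B D : Ob) (d : Ext D A) (x : hom A B) (y : hom B D) :
  real d x y -> comp y x = 0.
Proof.
move=> Hd; have [P [i1 [i2 [p1 [p2 Hbp]]]]] := biproduct_exists A D.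
have zero_morph : push (0 : hom A A) d = pull (idm D) 0.
  by rewrite push0l pull0r.
have [b [bx yb]] := real_morphism Hd (real_split Hbp) zero_morph.
by rewrite -[y]comp1l -yb -compA bx !comp0r.
Qed.

Lemma split_conflation (A E D : Ob) (e : hom A E) (e' : hom E D) :
  real (0 : Ext D A) e e' ->
  exists (s : hom D E) (r : hom E A), is_biproduct s e e' r.
Proof.
move=> He; have [P [i1 [i2 [p1 [p2 Hbp]]]]] := biproduct_exists A D.
have [b [[g [gb bg]] [bi1 e'b]]] := real_equiv (real_split Hbp) He.
case: Hbp => p1i1 p2i2 p1i2 p2i1 sum1.
have e'E : e' = comp p2 g by rewrite -[e']comp1r -bg compA e'b.
subst e e'; exists (comp b i2), (comp p1 g).
split; try by rewrite -!compA (compA g b) gb comp1l.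
rewrite -!compA -compDr (compA i2) (compA i1) -compDl addrC sum1 comp1l.
exact: bg.
Qed.

Lemma exact_push (K E0 Y D : Ob) (k : hom K E0) (w : hom E0 Y)
    (d0 : Ext Y K) (eps : Ext D K) :
  real d0 k w -> push k eps = 0 -> exists c : hom D Y, eps = pull c d0.
Proof.
move=> Hd0 keps0; have [V [u [v Huv]]] := real_exists eps.
have [P [i1 [i2 [p1 [p2 Hbp]]]]] := biproduct_exists E0 D.
have split_morph : push k eps = pull (idm D) 0 by rewrite keps0 pull0r.
have [b [bu _]] := real_morphism Huv (real_split Hbp) split_morph.
have extends_k : comp (comp p1 b) u = comp k (idm K).
  by case: Hbp => p1i1 _ _ _ _; rewrite -compA bu compA p1i1 comp1l comp1r.
have [c [_ epsE]] := et3 Huv Hd0 extends_k.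
by exists c; rewrite -epsE push1.
Qed.

Lemma biproduct_change_section (A D E : Ob) (s s' : hom D E) (e : hom A E)
    (e' : hom E D) (r : hom E A) :
  is_biproduct s e e' r -> comp e' s' = idm D ->
  is_biproduct s' e e' (r - comp (comp r s') e').
Proof.
case=> e's re e'e rs sum1 e's'.
have s'E : s' = s + comp e (comp r s').
  by rewrite -{1}[s']comp1l -sum1 compDl -!compA e's' comp1r.
split => //.
- by rewrite compBl re -compA e'e comp0r subr0.
- by rewrite compBl -compA e's' comp1r subrr.
- rewrite compBr {1}s'E compDl (compA e (comp r s') e') -sum1.
  by rewrite addrA addrAC addrK.
Qed.

(* The splitting of Y -e-> E -e'-> D produced by (ET4) can be chosen so that
   the section s pulls d'' back to d: this is where exactness is used. *)
Lemma compatible_section (K E0 Y E D : Ob) (k : hom K E0) (w : hom E0 Y)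
    (d0 : Ext Y K) (d : Ext D K) (d'' : Ext E K) (e : hom Y E) (e' : hom E D) :
  real d0 k w -> real (0 : Ext D Y) e e' ->
  pull e d'' = d0 -> push k d'' = pull e' (push k d) ->
  exists (s : hom D E) (r : hom E Y), is_biproduct s e e' r /\ pull s d'' = d.
Proof.
move=> Hd0 He ed'' kd''.
have [s0 [r0 Hbp]] := split_conflation He.
have e's0 : comp e' s0 = idm D by case: Hbp.
have killed : push k (pull s0 d'' - d) = 0.
  by rewrite pushBr pushpull kd'' -pullC e's0 pull1 subrr.
have [c cE] := exact_push Hd0 killed.
have e's : comp e' (s0 - comp e c) = idm D.
  by rewrite compBr e's0 compA (real_comp0 He) comp0l subr0.
exists (s0 - comp e c), (r0 - comp (comp r0 (s0 - comp e c)) e').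
split; first exact: biproduct_change_section Hbp e's.
by rewrite pullBl pullC ed'' -cE opprB addrC subrK.
Qed.

Lemma pushout_conflation (K X0 D E0 Y : Ob) (x : hom K X0) (y : hom X0 D)
    (d : Ext D K) (k : hom K E0) (w : hom E0 Y) (d0 : Ext Y K) :
  real d x y -> real d0 k w ->
  exists (M X0' : Ob), [/\ Etri E0 M D, Etri X0' M Y & isomorphic X0 X0'].
Proof.
move=> Hd Hd0; have [M [m [p Hmp]]] := real_exists (push k d).
have [E [e [e' [h' [d'' [Hd'' [He [_ [_ [ed'' kd'']]]]]]]]]] := et4 Hd0 Hmp.
rewrite -pushC (real_comp0 Hd0) push0l in He.
have [s [r [Hbp sd'']]] := compatible_section Hd0 He ed'' kd''.
have [X0' [e3 [e4 [h2 [d3 [Hd3 [He34 _]]]]]]] := et4op Hd'' (real_split Hbp).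
rewrite sd'' in He34; have [b [biso _]] := real_equiv Hd He34.
exists M, X0'; split; first by exists m, p, (push k d).
- by exists h2, (comp r h'), d3.
- by exists b.
Qed.

Lemma pushout_in_closed (X : Ob -> Prop) (K X0 D E0 Y : Ob) :
  (forall A B : Ob, isomorphic A B -> X A -> X B) -> extension_closed X ->
  Etri K X0 D -> X X0 -> Etri K E0 Y -> X Y ->
  exists M : Ob, X M /\ Etri E0 M D.
Proof.
move=> Xiso Xext [x [y [d Hd]]] XX0 [k [w [d0 Hd0]]] XY.
have [M [X0' [HM HX0' iso]]] := pushout_conflation Hd Hd0.
by exists M; split => //; apply: Xext HX0' (Xiso _ _ iso XX0) XY.
Qed.

Lemma Etri_octahedron (A B D C0 F : Ob) :
  Etri A B D -> Etri B C0 F -> exists E : Ob, Etri A C0 E /\ Etri D E F.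
Proof.
move=> [f [f' [d Hd]]] [g [g' [d' Hd']]].
have [E [e [e' [h' [d'' [Hd'' [He _]]]]]]] := et4 Hd Hd'.
by exists E; split; [exists (comp g f), h', d'' | exists e, e', (push f' d')].
Qed.

End Extriangulated.

Section Resolutions.
Variables (C : ExtriData) (X W : obj C -> Prop).
Hypothesis Wcog : cogenerator W X.

Lemma Xhat0 (D : obj C) : Xhat X 0 D -> X D.
Proof. by case=> K [<-]. Qed.

Lemma Xhat_succ (n : nat) (D : obj C) :
  Xhat X n.+1 D ->
  exists (K1 X0 : obj C), [/\ X X0, Etri K1 X0 D & Xhat X n K1].
Proof.
case=> K [<- XKn HK]; have [X0 [XX0 HK1]] := HK 0%N isT.
exists (K 1%N), X0; split => //.
by exists (fun i => K i.+1); split => // i Hi; apply: HK.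
Qed.

(* Conversely, W-resolutions are X-resolutions since W is contained in X. *)
Lemma W_resolution_Xhat (n : nat) (D : obj C) :
  (1 <= n)%N -> W_resolution X W n D -> Xhat X n D.
Proof.
move=> n_gt0 [X0 [K [XX0 HK1 WKn HK]]].
exists (fun i => if i is 0%N then D else K i); split => //.
- by case: n n_gt0 WKn {HK} => // n _ /Wcog.1.
- case=> [|i] Hi; first by exists X0.
  have [Wi [WWi HWi]] := HK i.+1 isT (leq_sub2r 1 Hi).
  by exists Wi; split => //; apply: Wcog.1.
Qed.

Hypothesis HC : extriangulated C.
Hypothesis Xiso : forall A B : obj C, isomorphic A B -> X A -> X B.
Hypothesis Xext : extension_closed X.

(* A one-step X-resolution K1 -> X0 -> D with K1 in X becomes a W-resolution:
   replace K1 by a cogenerator object W0 and X0 by the pushout M. *)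
Lemma W_resolution_base (K1 X0 D : obj C) :
  X K1 -> X X0 -> Etri K1 X0 D -> W_resolution X W 1 D.
Proof.
move=> XK1 XX0 HK1; have [W0 [X' [WW0 [XX' HW0]]]] := Wcog.2 _ XK1.
have [M [XM HM]] := pushout_in_closed HC Xiso Xext HK1 XX0 HW0 XX'.
by exists M, (fun=> W0); split => // -[|i].
Qed.

(* Extending a W-resolution of K1 by a conflation K1 -> X0 -> D: embed the
   first term Y0 into W1 (cone Y'), combine via (ET4), and push along. *)
Lemma W_resolution_step (n : nat) (K1 X0 D : obj C) :
  (1 <= n)%N -> W_resolution X W n K1 -> X X0 -> Etri K1 X0 D ->
  W_resolution X W n.+1 D.
Proof.
move=> n_gt0 [Y0 [L [XY0 HL1 WLn HL]]] XX0 HK1.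
have [W1 [Y' [WW1 [XY' HW1]]]] := Wcog.2 _ XY0.
have [E [HE HK1E]] := Etri_octahedron HC HL1 HW1.
have [M [XM HM]] := pushout_in_closed HC Xiso Xext HK1 XX0 HK1E XY'.
exists M, (fun i => if i == 1%N then E else L i.-1); split => //.
- by case: n n_gt0 WLn {HL}.
- case=> [|[|i]] // _ Hi; first by exists W1.
  rewrite subSS subn0 in Hi.
  by apply: HL; rewrite // subn1 -ltnS prednK.
Qed.

Lemma Xhat_W_resolution (n : nat) (D : obj C) :
  (1 <= n)%N -> Xhat X n D -> W_resolution X W n D.
Proof.
elim: n D => [|[|n] IH] D // _ /Xhat_succ [K1 [X0 [XX0 HK1 HK1n]]].
- exact: W_resolution_base (Xhat0 HK1n) XX0 HK1.
- exact: W_resolution_step (IH _ isT HK1n) XX0 HK1.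
Qed.

End Resolutions.

Theorem lemma3p6 (C : ExtriData) (X W : obj C -> Prop) (n : nat) (D : obj C) :
  extriangulated C -> enough_projectives C -> enough_injectives C ->
  subcategory X -> subcategory W ->
  extension_closed X -> cogenerator W X -> (1 <= n)%N ->
  (Xhat X n D <-> W_resolution X W n D).
Proof.
move=> HC _ _ [Xiso _ _ _] _ Xext Wcog n_gt0; split.
- exact: (Xhat_W_resolution Wcog HC Xiso Xext (D := D) n_gt0).
- exact: (W_resolution_Xhat Wcog (D := D) n_gt0).
Qed.
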